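(* Let $(\mathscr{D},b)$ be a finite bilinear form with $(\mathscr{D},b)\cong(\mathscr{D},-b)$, and let $\sigma\in\{0,4\}$. Then, up to isomorphism, there is at most one finite quadratic form $(\mathscr{D},q)$ such that $q$ refines $b$, $(\mathscr{D},q)\cong(\mathscr{D},-q)$, and $\tau_1(q)/|\tau_1(q)|=e^{2\pi i\sigma/8}$, where $\tau_1(q)=\sum_{x\in\mathscr{D}}e^{2\pi i q(x)}$.
   Context: A finite bilinear form $(\mathscr{D},b)$ is a finite abelian group $\mathscr{D}$ with a symmetric, bilinear, non-degenerate map $b:\mathscr{D}\times\mathscr{D}\to\mathbb{Q}/\mathbb{Z}$. A finite quadratic form $(\mathscr{D},q)$ is a map $q:\mathscr{D}\to\mathbb{Q}/\mathbb{Z}$ with $q(nx)=n^2q(x)$ for all $n\in\mathbb{Z}$ and $q(x+y)-q(x)-q(y)$ a non-degenerate symmetric bilinear form; $q$ refines $b$ if $q(x+y)-q(x)-q(y)=b(x,y)$ for all $x,y$. Two forms (bilinear or quadratic) on $\mathscr{D}$ and $\mathscr{D}'$ are isomorphic if they are related by precomposition with a group isomorphism $\mathscr{D}\to\mathscr{D}'$. *)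

(* finite abelian groups as finZmodType, Q/Z-valued maps as
   rat-valued maps compared modulo Z, Gauss sums in complex R (real_closed)
   with R the real numbers (Stdlib R, a realType via Rstruct). *)
From HB Require Import structures.
From mathcomp Require Import all_boot all_order all_algebra.
From mathcomp Require Import classical_sets reals Rstruct trigo.
From mathcomp Require Import complex.
Set Implicit Arguments. Unset Strict Implicit. Unset Printing Implicit Defensive.
Import Order.TTheory GRing.Theory Num.Theory.
Local Open Scope ring_scope.

Definition eqQZ (a b : rat) : Prop := (a - b) \is a Num.int.

Section Forms.
Variable D : finZmodType.

Definition finite_bilinear_form (b : D -> D -> rat) : Prop :=
  [/\ forall x y, eqQZ (b x y) (b y x),
      forall x y z, eqQZ (b (x + y) z) (b x z + b y z),
      forall x y z, eqQZ (b x (y + z)) (b x y + b x z)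
    & forall x, (forall y, eqQZ (b x y) 0) -> x = 0].

Definition polar (q : D -> rat) : D -> D -> rat :=
  fun x y => q (x + y) - q x - q y.

Definition finite_quadratic_form (q : D -> rat) : Prop :=
  (forall (n : int) (x : D), eqQZ (q (x *~ n)) ((n ^+ 2)%:~R * q x))
  /\ finite_bilinear_form (polar q).

Definition refines (q : D -> rat) (b : D -> D -> rat) : Prop :=
  forall x y, eqQZ (polar q x y) (b x y).

Definition group_iso (f : D -> D) : Prop :=
  bijective f /\ {morph f : x y / x + y}.

Definition iso_bil (b b' : D -> D -> rat) : Prop :=
  exists f : D -> D, group_iso f /\ forall x y, eqQZ (b' (f x) (f y)) (b x y).

Definition iso_quad (q q' : D -> rat) : Prop :=
  exists f : D -> D, group_iso f /\ forall x, eqQZ (q' (f x)) (q x).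

Definition neg_bil (b : D -> D -> rat) : D -> D -> rat := fun x y => - b x y.
Definition neg_quad (q : D -> rat) : D -> rat := fun x => - q x.

End Forms.

Definition expi (r : rat) : complex Rdefinitions.R :=
  (cos (2 * pi * ratr r) +i* sin (2 * pi * ratr r))%C.

Definition tau1 (D : finZmodType) (q : D -> rat) : complex Rdefinitions.R :=
  \sum_(x : D) expi (q x).

(* Two quadratic forms q, q' refining b differ by d = q' - q, which is
   additive modulo Z with 2d = 0 mod Z. The substitution x = z + y gives
     tau1 q' * conj (tau1 q) = \sum_z e(q' z) * \sum_y e(b(z, y) + d(y)),
   and by orthogonality of characters the inner sum is |D| for the unique
   z = c with b(c, -) + d = 0 mod Z, if there is one, and 0 otherwise. Equal
   phases make the left-hand side positive, so c exists and q'(c) is in Z;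
   then 2c = 0 and q'(x + c) = q(x) mod Z. Translation by c is not additive,
   but x |-> x + [d(x) not in Z] c is an automorphism of D carrying q to q'. *)

From HB Require Import structures.
From mathcomp Require Import all_boot all_order all_algebra.
From mathcomp Require Import classical_sets reals Rstruct trigo.
From mathcomp Require Import complex ring lra zify.
Import Order.TTheory GRing.Theory Num.Theory.
Local Open Scope ring_scope.

Local Notation R := Rdefinitions.R.

Lemma int_of_eq {x : rat} (y : rat) : x = y -> y \is a Num.int -> x \is a Num.int.
Proof. by move=> ->. Qed.

Lemma addrr_int_half {x : rat} :
  x + x \is a Num.int -> x \notin Num.int -> x + 2^-1 \is a Num.int.
Proof.
move=> /intrP [m Em] x_nint.
have le0r := modz_ge0 m (isT : 2 != 0 :> int).
have ltr2 := ltz_mod m (isT : 2 != 0 :> int).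
have Em2 := divz_eq m 2.
have [r0|r1] : (m %% 2)%Z = 0 \/ (m %% 2)%Z = 1 by lia.
  case/negP: x_nint; apply/intrP; exists (m %/ 2)%Z.
  by rewrite Em2 r0 addr0 intrM in Em; lra.
apply/intrP; exists ((m %/ 2)%Z + 1).
by rewrite Em2 r1 intrD intrM in Em; rewrite intrD; lra.
Qed.

Lemma eqQZ_int {a b : rat} : eqQZ a b -> (a \is a Num.int) = (b \is a Num.int).
Proof. by move=> ab; rewrite -[a](subrK b) rpredDl. Qed.

Lemma int_addr_halves (a b : rat) : a + a \is a Num.int -> b + b \is a Num.int ->
  (a + b \is a Num.int) = ((a \is a Num.int) == (b \is a Num.int)).
Proof.
move=> a2 b2; have [aZ|aNZ] := boolP (a \is a Num.int); first by rewrite rpredDl.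
have [bZ|bNZ] := boolP (b \is a Num.int); first by rewrite rpredDr // (negPf aNZ).
have [ah bh] := (addrr_int_half a2 aNZ, addrr_int_half b2 bNZ).
apply: (int_of_eq ((a + 2^-1) + (b + 2^-1) - 1)); first by lra.
by apply: rpredB; [exact: rpredD | exact: rpred1].
Qed.

Lemma expiD a b : expi (a + b) = expi a * expi b.
Proof.
rewrite /expi rmorphD mulrDr cosD sinD; simpc.
by congr (_ +i* _)%C; ring.
Qed.

Lemma expi_int r : r \is a Num.int -> expi r = 1.
Proof.
move=> /intrP [k ->].
have expi_nat n : cos (2 * pi * n%:R) = 1 :> R /\ sin (2 * pi * n%:R) = 0 :> R.
  have -> : 2 * pi * n%:R = 0 + pi *+ 2 *+ n :> R by rewrite add0r; ring.
  by rewrite (periodicn (@cosD2pi R)) (periodicn (@sinD2pi R)) cos0 sin0.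
rewrite /expi rmorph_int; case: k => n; first by have [-> ->] := expi_nat n.
by rewrite NegzE mulrNz mulrN cosN sinN; have [-> ->] := expi_nat n.+1; rewrite oppr0.
Qed.

Lemma expi_eqQZ a b : eqQZ a b -> expi a = expi b.
Proof. by move=> ab; rewrite -[a](subrK b) expiD expi_int ?mul1r. Qed.

Lemma expiN r : (expi r)^* = expi (- r).
Proof. by rewrite /expi rmorphN mulrN cosN sinN; simpc. Qed.

Lemma norm_expi r : `|expi r| = 1.
Proof. by apply/eqP; rewrite -sqrp_eq1 // normCK expiN -expiD subrr expi_int. Qed.

Lemma expi_eq1 r : expi r = 1 -> r \is a Num.int.
Proof.
move=> er1; set f := r - (Num.floor r)%:~R.
have /andP [le0f ltf1] : 0 <= f < 1.
  by have := Num.Theory.floor_itv r; rewrite intrD /f; lra.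
have /eqP sin0 : sin (pi * ratr f) == 0 :> R.
  have : expi f = 1.
    rewrite -er1; apply: expi_eqQZ.
    by rewrite /eqQZ /f addrAC subrr add0r rpredN intr_int.
  rewrite /expi -mulrA mulr_natl cos_mulr2n cos2sin2 => -[cos1 _].
  by rewrite -sqrf_eq0; apply/eqP; lra.
have {sin0} f0 : f = 0.
  apply/eqP; rewrite eq_le le0f andbT leNgt; apply/negP => lt0f.
  have : 0 < pi * (ratr f : R) < pi.
    rewrite mulr_gt0 ?pi_gt0 ?ltr0q //= gtr_pMr ?pi_gt0 //.
    by rewrite -(rmorph1 (@ratr R)) ltr_rat.
  by move/sin_gt0_pi; rewrite sin0 ltxx.
by apply/intrP; exists (Num.floor r); apply/eqP; rewrite -subr_eq0 -/f f0.
Qed.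

Lemma expi_gt0 r : 0 < expi r -> r \is a Num.int.
Proof. by move=> /gtr0_norm; rewrite norm_expi => /esym /expi_eq1. Qed.

Lemma mul_conjC_gt0_eq_phase {F : numClosedFieldType} {z w : F} :
  z != 0 -> w != 0 -> z / `|z| = w / `|w| -> 0 < z * w^*.
Proof.
move=> z0 w0 phase; set u := z / `|z| in phase.
have u0 : u != 0 by rewrite mulf_neq0 ?invr_eq0 ?normr_eq0.
have [-> ->] : z = u * `|z| /\ w = u * `|w|.
  by split; [rewrite /u | rewrite phase]; rewrite divfK ?normr_eq0.
rewrite rmorphM /= conj_normC mulrACA.
by apply: mulr_gt0; [rewrite mul_conjC_gt0 | apply: mulr_gt0; rewrite normr_gt0].
Qed.

Definition additive_QZ {G : zmodType} (chi : G -> rat) :=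
  forall x y, eqQZ (chi (x + y)) (chi x + chi y).

Lemma sum_expi_additive (D : finZmodType) (chi : D -> rat) : additive_QZ chi ->
  \sum_(y : D) expi (chi y) = if [forall y, chi y \is a Num.int] then #|D|%:R else 0.
Proof.
move=> chiD; case: ifP => [/forallP chiZ | /negbT/forallPn [y0 chiNZ]].
  by rewrite (eq_bigr (fun _ => 1)) ?sumr_const // => y _; rewrite expi_int.
set S := \sum_(y : D) _.
have SE : S * expi (chi y0) = S.
  rewrite mulr_suml /S [RHS](reindex_inj (addIr y0)) /=.
  by apply: eq_bigr => y _; rewrite -expiD; exact/esym/expi_eqQZ/chiD.
have e_neq1 : expi (chi y0) != 1 by apply: contra chiNZ => /eqP /expi_eq1.
apply/eqP; move: SE => /eqP; rewrite -subr_eq0 -{2}[S]mulr1 -mulrBr mulf_eq0.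
by rewrite subr_eq0 (negPf e_neq1) orbF.
Qed.

Definition cross_char {D : finZmodType} (q q' : D -> rat) (z y : D) : rat :=
  polar q' z y + (q' y - q y).

Lemma tau1_mul_conjC (D : finZmodType) (q q' : D -> rat) :
  tau1 q' * (tau1 q)^* =
    \sum_(z : D) expi (q' z) * \sum_(y : D) expi (cross_char q q' z y).
Proof.
rewrite /tau1 rmorph_sum mulr_suml.
under eq_bigr do rewrite mulr_sumr.
under [RHS]eq_bigr do rewrite mulr_sumr.
rewrite [LHS]exchange_big [RHS]exchange_big /=; apply: eq_bigr => y _.
rewrite (reindex_inj (addIr y)) /=; apply: eq_bigr => z _.
by rewrite expiN -!expiD /cross_char /polar; congr expi; ring.
Qed.

Section CrossCharacter.
Context {D : finZmodType} {q q' : D -> rat}.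
Hypothesis polar_q' : finite_bilinear_form (polar q').
Hypothesis polar_eq : forall x y, eqQZ (polar q' x y) (polar q x y).

Lemma cross_char_additive z : additive_QZ (cross_char q q' z).
Proof.
case: polar_q' => _ _ polarD _ x y; rewrite /eqQZ.
apply: (int_of_eq ((polar q' z (x + y) - (polar q' z x + polar q' z y))
                   + (polar q' x y - polar q x y))).
  by rewrite /cross_char /polar; ring.
exact: rpredD (polarD _ _ _) (polar_eq _ _).
Qed.

Lemma cross_char_int_inj z c :
  (forall y, cross_char q q' z y \is a Num.int) ->
  (forall y, cross_char q q' c y \is a Num.int) -> z = c.
Proof.
case: polar_q' => _ polarD _ nondeg zZ cZ; apply/eqP; rewrite -subr_eq0; apply/eqP.
apply: nondeg => y; rewrite /eqQZ subr0.
apply: (int_of_eq ((cross_char q q' z y - cross_char q q' c y)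
                   - (polar q' (z - c + c) y - (polar q' (z - c) y + polar q' c y)))).
  by rewrite subrK /cross_char; ring.
by apply: rpredB; [exact: rpredB | exact: polarD].
Qed.

Lemma tau1_mul_conjC_gt0 : 0 < tau1 q' * (tau1 q)^* ->
  exists c, (forall y, cross_char q q' c y \is a Num.int) /\ q' c \is a Num.int.
Proof.
pose int_char z := [forall y, cross_char q q' z y \is a Num.int].
have sumE z : \sum_(y : D) expi (cross_char q q' z y) = if int_char z then #|D|%:R else 0.
  exact/sum_expi_additive/cross_char_additive.
rewrite tau1_mul_conjC; under eq_bigr do rewrite sumE.
case: (pickP int_char) => [c cZ | noZ]; last first.
  by rewrite big1 ?ltxx // => z _; rewrite noZ mulr0.
rewrite (bigD1 c) //= cZ big1 ?addr0 => [|z zc]; last first.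
  case: ifPn => [/forallP zZ|_]; last exact: mulr0.
  by rewrite (cross_char_int_inj _ _ zZ (forallP cZ)) eqxx in zc.
rewrite pmulr_lgt0 ?ltr0n => [/expi_gt0 q'cZ|]; last by apply/card_gt0P; exists 0.
by exists c; split => //; apply/forallP.
Qed.

End CrossCharacter.

Definition flip {G : zmodType} (d : G -> rat) (c x : G) : G :=
  if d x \is a Num.int then x else x + c.

Section Flip.
Context {G : zmodType} {d : G -> rat} {c : G}.
Hypotheses (dD : additive_QZ d) (d_half : forall x, d x + d x \is a Num.int).
Hypotheses (c2 : c + c = 0) (dcZ : d c \is a Num.int).

Lemma additive_half_intD x y :
  (d (x + y) \is a Num.int) = ((d x \is a Num.int) == (d y \is a Num.int)).
Proof. by rewrite (eqQZ_int (dD x y)) int_addr_halves. Qed.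

Lemma flip_involutive : involutive (flip d c).
Proof.
move=> x; rewrite /flip; case dxZ: (d x \is a Num.int); first by rewrite dxZ.
by rewrite additive_half_intD dcZ dxZ /= -addrA c2 addr0.
Qed.

Lemma flip_additive : {morph flip d c : x y / x + y}.
Proof.
move=> x y; rewrite /flip additive_half_intD.
case: (d x \is a Num.int); case: (d y \is a Num.int) => /=.
- by [].
- by rewrite addrA.
- by rewrite addrAC.
- by rewrite addrACA c2 addr0.
Qed.

End Flip.

Lemma quadratic_form0 (D : finZmodType) (Q : D -> rat) :
  finite_quadratic_form Q -> Q 0 \is a Num.int.
Proof. by case=> /(_ 0 0); rewrite /eqQZ mulr0z expr0n mul0r subr0. Qed.

Lemma quadratic_form_double (D : finZmodType) (Q : D -> rat) :
  finite_quadratic_form Q -> forall x, eqQZ (Q (x + x)) (4 * Q x).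
Proof. by case=> homQ _ x; have := homQ 2 x; rewrite -mulr2n. Qed.

Section ShiftIso.
Context {D : finZmodType} {q q' : D -> rat} {c : D}.
Hypotheses (qQ : finite_quadratic_form q) (q'Q : finite_quadratic_form q').
Hypothesis polar_eq : forall x y, eqQZ (polar q' x y) (polar q x y).
Hypothesis cZ : forall y, cross_char q q' c y \is a Num.int.
Hypothesis q'cZ : q' c \is a Num.int.

Let d x := q' x - q x.

Lemma diff_additive : additive_QZ d.
Proof.
move=> x y; apply: (int_of_eq (polar q' x y - polar q x y)); last exact: polar_eq.
by rewrite /d /polar; ring.
Qed.

Lemma diff_half x : d x + d x \is a Num.int.
Proof.
apply: (int_of_eq ((d (x + x) - (d x + d x))
                   - ((q' (x + x) - 4 * q' x) - (q (x + x) - 4 * q x)))).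
  by rewrite /d; ring.
apply: rpredB; first exact: diff_additive.
by apply: rpredB; apply: quadratic_form_double.
Qed.

Lemma shift_order2 : c + c = 0.
Proof.
case: q'Q => _ [_ polarD _ nondeg]; apply: nondeg => y; rewrite /eqQZ subr0.
apply: (int_of_eq ((polar q' (c + c) y - (polar q' c y + polar q' c y))
                   + cross_char q q' c y + cross_char q q' c y - (d y + d y))).
  by rewrite /cross_char /d; ring.
exact: rpredB (rpredD (rpredD (polarD _ _ _) (cZ y)) (cZ y)) (diff_half y).
Qed.

Lemma quad_shift x : eqQZ (q' (x + c)) (q x).
Proof.
apply: (int_of_eq (cross_char q q' c x + q' c)); last exact: rpredD.
by rewrite /cross_char /polar [c + x]addrC; ring.
Qed.

Lemma diff_shift_int : d c \is a Num.int.
Proof.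
have qcZ : q c \is a Num.int.
  by rewrite -(eqQZ_int (quad_shift c)) shift_order2 quadratic_form0.
exact: rpredB.
Qed.

Lemma iso_quad_shift : iso_quad q q'.
Proof.
have flipK := flip_involutive diff_additive diff_half shift_order2 diff_shift_int.
have flipD := flip_additive diff_additive diff_half shift_order2.
exists (flip d c); split; first by split; first exists (flip d c).
move=> x; rewrite /flip; case: ifP => // _; exact: quad_shift.
Qed.

End ShiftIso.

Theorem proposition6 (D : finZmodType) (b : D -> D -> rat) (sigma : nat) :
  finite_bilinear_form b ->
  iso_bil b (neg_bil b) ->
  (sigma = 0%N \/ sigma = 4%N) ->
  forall q q' : D -> rat,
    finite_quadratic_form q -> refines q b -> iso_quad q (neg_quad q) ->
    tau1 q / `|tau1 q| = expi (sigma%:R / 8) ->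
    finite_quadratic_form q' -> refines q' b -> iso_quad q' (neg_quad q') ->
    tau1 q' / `|tau1 q'| = expi (sigma%:R / 8) ->
    iso_quad q q'.
Proof.
move=> _ _ _ q q' qQ qb _ phase_q q'Q q'b _ phase_q'.
have polar_eq x y : eqQZ (polar q' x y) (polar q x y).
  apply: (int_of_eq ((polar q' x y - b x y) - (polar q x y - b x y))); first by ring.
  exact: rpredB (q'b x y) (qb x y).
have tau1_neq0 (Q : D -> rat) : tau1 Q / `|tau1 Q| = expi (sigma%:R / 8) -> tau1 Q != 0.
  by move=> phase; apply: contra_eqN (norm_expi (sigma%:R / 8)) => /eqP Q0;
     rewrite -phase Q0 mul0r normr0 eq_sym oner_eq0.
have := mul_conjC_gt0_eq_phase (tau1_neq0 q' phase_q') (tau1_neq0 q phase_q).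
rewrite phase_q phase_q' => /(_ erefl) /(tau1_mul_conjC_gt0 q'Q.2 polar_eq).
by case=> c [cZ q'cZ]; exact: iso_quad_shift qQ q'Q polar_eq cZ q'cZ.
Qed.
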